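(* For a probability measure $\mu$ on $(0,\infty)$ and real $p$, let $\mu_p:=\int_{(0,\infty)}x^{p-2}\,\mu(\mathrm{d}x)$, let $L_\mu(d):=\int_{(0,\infty)}\min\!\big(1,\tfrac{d}{x}\big)\,\mu(\mathrm{d}x)$ for $d>0$, and for $c\in(0,1)$ let $\delta_\mu$ denote the unique root $d\in(0,\infty)$ of $L_\mu(d)=c$. Then: (I) For any $c\in(0,\tfrac12]$ and any real $\mu_{3*}>0$, there exists a probability measure $\mu$ on $(0,\infty)$ with $\mu_3=\mu_{3*}$ and $\delta_\mu=c\,\mu_{3*}$. (II) For any $c\in(\tfrac12,1)$ and any real $\mu_{3*}>0$, $\mu_{1*}>0$ with $\mu_{3*}\mu_{1*}\ge1$, there exists a probability measure $\mu$ on $(0,\infty)$ with $\mu_3=\mu_{3*}$, $\mu_1=\mu_{1*}$, and $$\delta_\mu=\frac{\mu_{3*}-(2c-1)^2/\mu_{1*}}{4(1-c)}.$$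
   Context: $\mu_1=\int_{(0,\infty)}x^{-1}\,\mu(\mathrm{d}x)$ and $\mu_3=\int_{(0,\infty)}x\,\mu(\mathrm{d}x)$. For every probability measure $\mu$ on $(0,\infty)$ and $c\in(0,1)$ the equation $L_\mu(d)=c$ has a unique root in $(0,\infty)$. *)

From HB Require Import structures.
From mathcomp Require Import all_boot all_order all_algebra.
From mathcomp Require Import all_classical all_reals all_analysis.
Set Implicit Arguments. Unset Strict Implicit. Unset Printing Implicit Defensive.
Import Order.TTheory GRing.Theory Num.Theory.
Import numFieldNormedType.Exports.
Local Open Scope classical_set_scope.
Local Open Scope ring_scope.

(* A probability measure on (0,oo) is represented as a probability measure on
   the Borel sets of R that gives full mass to the open half-line ]0,+oo[. *)
Definition prob_on_pos (R : realType) (mu : probability R R) : Prop :=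
  mu `]0%R, +oo[%classic = 1%E.

Definition moment (R : realType) (mu : probability R R) (p : R) : \bar R :=
  (\int[mu]_(x in `]0%R, +oo[%classic) ((x `^ (p - 2))%:E))%E.

Definition Lfun (R : realType) (mu : probability R R) (d : R) : \bar R :=
  (\int[mu]_(x in `]0%R, +oo[%classic) ((Num.min 1 (d / x))%:E))%E.

(* delta_mu := the (unique) root d in (0,oo) of L_mu(d) = c
   (chosen via xget; the uniqueness is a standing fact of the paper). *)
Definition delta (R : realType) (mu : probability R R) (c : R) : R :=
  xget 0 [set d : R | 0 < d /\ Lfun mu d = c%:E].

From Pilot Require Import Defs.
From mathcomp Require Import all_boot all_order all_algebra.
From mathcomp Require Import all_classical all_reals all_analysis measurable_realfun.
From mathcomp Require Import ring lra.
Import Order.TTheory GRing.Theory Num.Theory.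
Local Open Scope ring_scope.

(* Both parts are witnessed by laws with at most two atoms.  For (I) the point
   mass at mu3* works, as then L(d) = min(1, d/mu3* ).  For (II) let delta be
   the prescribed value, l = (2c-1)/mu1* and h = 2 delta - l, and put mass s on
   h and 1 - s on l, where s = (1-c) h / (delta - l).  Since l <= delta < h,
   L(delta) = 1 - s + s delta/h = c; since h - delta = delta - l, the mean and
   the mean of 1/x come out as mu3* and mu1*; and s <= 1 is exactly
   mu3* mu1* >= 1.  The root of L(d) = c is unique because L of a two-point law
   is strictly increasing wherever it is below 1. *)

Section capped_ratio.
Context {R : realFieldType}.
Implicit Types w x : R.

Lemma min1_div_le x (d1 d2 : R) : 0 < x -> d1 <= d2 ->
  Num.min 1 (d1 / x) <= Num.min 1 (d2 / x).
Proof.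
move=> x_gt0 d12; rewrite le_min !ge_min lexx /=.
by rewrite ler_pM2r ?invr_gt0 // d12 orbT.
Qed.

Lemma weighted_min1_div_lt w x (d1 d2 : R) : 0 < x -> d1 < d2 ->
  w * Num.min 1 (d1 / x) < w ->
  w * Num.min 1 (d1 / x) < w * Num.min 1 (d2 / x).
Proof.
move=> x_gt0 d12 lt_w.
have min_le1 : Num.min 1 (d1 / x) <= 1 by rewrite ge_min lexx.
have w_gt0 : 0 < w by nra.
have : Num.min 1 (d1 / x) < 1 by rewrite -(ltr_pM2l w_gt0) mulr1.
rewrite gt_min ltxx /= => d1x_lt1.
rewrite ltr_pM2l // (min_r (ltW d1x_lt1)) lt_min d1x_lt1.
by rewrite ltr_pM2r ?invr_gt0.
Qed.

Section capped_mixture.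
Context {p q a b : R}.
Hypotheses (p_ge0 : 0 <= p) (q_ge0 : 0 <= q) (pq1 : p + q = 1).
Hypotheses (a_gt0 : 0 < a) (b_gt0 : 0 < b).

Local Notation phi d := (p * Num.min 1 (d / a) + q * Num.min 1 (d / b)).

Lemma capped_mixture_lt (d1 d2 : R) :
  d1 < d2 -> phi d1 < 1 -> phi d1 < phi d2.
Proof.
move=> d12; rewrite -[X in _ < X -> _]pq1.
have [lt_p|] := ltP (p * Num.min 1 (d1 / a)) p.
- move=> _; apply: ltr_leD; first exact: weighted_min1_div_lt.
  by rewrite ler_wpM2l // min1_div_le // ltW.
- move=> ge_p lt1.
  have lt_q : q * Num.min 1 (d1 / b) < q by lra.
  apply: ler_ltD; last exact: weighted_min1_div_lt.
  by rewrite ler_wpM2l // min1_div_le // ltW.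
Qed.

Lemma capped_mixture_inj {c d1 d2 : R} :
  c < 1 -> phi d1 = c -> phi d2 = c -> d1 = d2.
Proof.
move=> c_lt1 phi1 phi2; have [d12|d21|//] := ltgtP d1 d2.
- by have := capped_mixture_lt _ _ d12; rewrite phi1 phi2 ltxx => /(_ c_lt1).
- by have := capped_mixture_lt _ _ d21; rewrite phi1 phi2 ltxx => /(_ c_lt1).
Qed.

End capped_mixture.
End capped_ratio.

Lemma mnormalize_mass1 d (T : measurableType d) (R : realType)
    (mu : {measure set T -> \bar R}) (P : probability T R) (A : set T) :
  mu setT = 1%E -> mnormalize mu P A = mu A.
Proof. by move=> mu1; rewrite /mnormalize mu1 /= onee_eq0 /= invr1 mule1. Qed.

Section two_point.
Local Open Scope classical_set_scope.
Context {R : realType}.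
Variables (p q : {nonneg R}) (a b : R).

Definition two_point_mass :=
  measure_add (mscale p (@dirac _ R a R)) (mscale q (@dirac _ R b R)).

(* [\d_0] is only the fallback of [mnormalize] for a total mass 0 or +oo. *)
Definition two_point : probability R R :=
  mnormalize two_point_mass (@dirac _ R 0 R).

Hypotheses (pq1 : p%:num + q%:num = 1) (a_gt0 : 0 < a) (b_gt0 : 0 < b).

Lemma two_point_massE A :
  two_point_mass A = ((p%:num)%:E * \d_a A + (q%:num)%:E * \d_b A)%E.
Proof. exact: measure_addE. Qed.

Lemma two_pointE A : two_point A = two_point_mass A.
Proof.
apply: mnormalize_mass1; apply: etrans (two_point_massE _) _.
by rewrite !diracT !mule1 -EFinD pq1.
Qed.

Lemma two_point_pos : prob_on_pos two_point.
Proof.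
rewrite /prob_on_pos two_pointE two_point_massE !diracE.
by rewrite !mem_set /= ?in_itv /= ?a_gt0 ?b_gt0 // !mule1 -EFinD pq1.
Qed.

Lemma integral_two_point (g : R -> R) :
  measurable_fun (`]0%R, +oo[%classic : set R) g ->
  (forall x, 0 < x -> 0 <= g x) ->
  (\int[two_point]_(x in `]0%R, +oo[) (g x)%:E =
   (p%:num * g a + q%:num * g b)%:E)%E.
Proof.
move=> mg g_ge0.
have mEg : measurable_fun (`]0%R, +oo[%classic : set R) (EFin \o g).
  exact/measurable_EFinP.
have Eg_ge0 x : (`]0%R, +oo[%classic : set R) x -> (0 <= (g x)%:E)%E.
  by rewrite /= in_itv /= andbT lee_fin; exact: g_ge0.
rewrite (eq_measure_integral two_point_mass); last first.
  by move=> A _ _; exact: two_pointE.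
rewrite ge0_integral_measure_add // !ge0_integral_mscale // !integral_dirac //.
by rewrite !diracE !mem_set /= ?in_itv /= ?a_gt0 ?b_gt0 // !mul1e -!EFinM -EFinD.
Qed.

Lemma moment_two_point r :
  moment two_point r = (p%:num * a `^ (r - 2) + q%:num * b `^ (r - 2))%:E.
Proof.
rewrite /moment; apply: (integral_two_point (fun x => x `^ (r - 2))) => [|x _].
- by apply: measurable_funTS; exact: measurable_powR.
- exact: powR_ge0.
Qed.

Lemma Lfun_two_point (d : R) : 0 <= d ->
  Defs.Lfun two_point d =
  (p%:num * Num.min 1 (d / a) + q%:num * Num.min 1 (d / b))%:E.
Proof.
move=> d_ge0; rewrite /Defs.Lfun.
apply: (integral_two_point (fun x => Num.min 1 (d / x))).
- apply: measurable_minr; first exact: measurable_cst.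
  apply: (eq_measurable_fun (fun x => d * x `^ (-1))).
    move=> x; rewrite inE /= in_itv /= andbT => x_gt0.
    by rewrite powR_inv1 ?ltW.
  apply: measurable_funM; first exact: measurable_cst.
  by apply: measurable_funTS; exact: measurable_powR.
- by move=> x x_gt0; rewrite le_min ler01 /= divr_ge0 // ltW.
Qed.

End two_point.

Section two_point_law.
Context {R : realType}.

Lemma delta_two_point (p q : {nonneg R}) (a b c d : R) :
  p%:num + q%:num = 1 -> 0 < a -> 0 < b -> 0 < d -> c < 1 ->
  p%:num * Num.min 1 (d / a) + q%:num * Num.min 1 (d / b) = c ->
  delta (two_point p q a b) c = d.
Proof.
move=> pq1 a_gt0 b_gt0 d_gt0 c_lt1 phi_d.
apply: xget_unique => [|d' [d'_gt0]].
  by split=> //; rewrite Lfun_two_point ?ltW // phi_d.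
rewrite Lfun_two_point ?ltW // => -[phi_d'].
exact: (capped_mixture_inj (ge0 p) (ge0 q) pq1 a_gt0 b_gt0 c_lt1 phi_d' phi_d).
Qed.

Lemma exists_two_point_law {s a b c d : R} :
  0 <= s <= 1 -> 0 < a -> 0 < b -> 0 < d -> c < 1 ->
  (1 - s) * Num.min 1 (d / a) + s * Num.min 1 (d / b) = c ->
  exists mu : probability R R,
    [/\ prob_on_pos mu,
        forall r, moment mu r = ((1 - s) * a `^ (r - 2) + s * b `^ (r - 2))%:E
      & delta mu c = d].
Proof.
case/andP=> s_ge0 s_le1 a_gt0 b_gt0 d_gt0 c_lt1 phi_d.
have s1_ge0 : 0 <= 1 - s by rewrite subr_ge0.
have w1 : (NngNum s1_ge0)%:num + (NngNum s_ge0)%:num = 1 by rewrite /= subrK.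
exists (two_point (NngNum s1_ge0) (NngNum s_ge0) a b); split.
- exact: two_point_pos.
- by move=> r; rewrite moment_two_point.
- exact: delta_two_point.
Qed.

End two_point_law.

Section two_point_witness.
Context {R : realFieldType}.
Variables (c m k : R).

Definition witness_delta := (m - (2 * c - 1) ^+ 2 / k) / (4 * (1 - c)).
Definition witness_lo := (2 * c - 1) / k.
Definition witness_hi := 2 * witness_delta - witness_lo.
Definition witness_weight :=
  (1 - c) * witness_hi / (witness_delta - witness_lo).

Local Notation D := witness_delta.
Local Notation L := witness_lo.
Local Notation H := witness_hi.
Local Notation s := witness_weight.

Hypotheses (c_gt : 2^-1 < c) (c_lt1 : c < 1).
Hypotheses (k_gt0 : 0 < k) (mk_ge1 : 1 <= m * k).

Let c1_gt0 : 0 < 1 - c. Proof. by rewrite subr_gt0. Qed.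
Let c2_gt0 : 0 < 2 * c - 1.
Proof. by rewrite subr_gt0 -ltr_pdivrMl // mulr1. Qed.
Let lo_k : L * k = 2 * c - 1. Proof. by rewrite mulfVK ?gt_eqF. Qed.

Let c_le_delta_k : c <= D * k.
Proof.
have DkE : 4 * (1 - c) * (D * k) = m * k - (2 * c - 1) ^+ 2.
  by rewrite /witness_delta; field; rewrite !gt_eqF.
have : 4 * (1 - c) * c <= 4 * (1 - c) * (D * k).
  by rewrite DkE expr2; have := mk_ge1; nra.
by rewrite ler_pM2l // pmulr_rgt0.
Qed.

Lemma witness_lo_gt0 : 0 < L. Proof. exact: divr_gt0. Qed.

Lemma witness_lo_lt_delta : L < D.
Proof.
rewrite -(ltr_pM2r k_gt0) lo_k (lt_le_trans _ c_le_delta_k) //.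
by have := c_lt1; lra.
Qed.

Lemma witness_delta_lt_hi : D < H.
Proof. by rewrite /witness_hi; have := witness_lo_lt_delta; lra. Qed.

Let DL_gt0 : 0 < D - L. Proof. by rewrite subr_gt0 witness_lo_lt_delta. Qed.
Let H_gt0 : 0 < H.
Proof.
exact: lt_trans (lt_trans witness_lo_gt0 witness_lo_lt_delta) witness_delta_lt_hi.
Qed.
Let weight_DL : s * (D - L) = (1 - c) * H.
Proof. by rewrite mulfVK ?gt_eqF. Qed.

Lemma witness_weight_itv : 0 <= s <= 1.
Proof.
apply/andP; split.
  by apply: divr_ge0; [apply: mulr_ge0|]; exact: ltW.
rewrite ler_pdivrMr // mul1r.
have cL_le : c * L <= (2 * c - 1) * D.
  by rewrite -(ler_pM2r k_gt0) -mulrA lo_k mulrC -mulrA ler_pM2l.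
by rewrite /witness_hi; lra.
Qed.

Lemma witness_mean : (1 - s) * L + s * H = m.
Proof.
have -> : (1 - s) * L + s * H = L + 2 * (s * (D - L)).
  by rewrite /witness_hi; ring.
rewrite weight_DL /witness_hi /witness_lo /witness_delta.
by field; rewrite !gt_eqF.
Qed.

Lemma witness_harmonic : (1 - s) * L^-1 + s * H^-1 = k.
Proof.
have -> : (1 - s) * L^-1 + s * H^-1 = L^-1 * (1 - 2 * (s * (D - L) / H)).
  by rewrite /witness_hi; field; rewrite -/witness_hi !gt_eqF ?witness_lo_gt0.
rewrite weight_DL mulfK ?gt_eqF // /witness_lo.
by field; rewrite !gt_eqF.
Qed.

Lemma witness_capped :
  (1 - s) * Num.min 1 (D / L) + s * Num.min 1 (D / H) = c.
Proof.
have DL_ge1 : 1 <= D / L.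
  rewrite ler_pdivlMr ?witness_lo_gt0 // mul1r.
  exact/ltW/witness_lo_lt_delta.
have DH_lt1 : D / H < 1 by rewrite ltr_pdivrMr // mul1r witness_delta_lt_hi.
rewrite (min_l DL_ge1) (min_r (ltW DH_lt1)) mulr1.
have -> : 1 - s + s * (D / H) = 1 - s * (D - L) / H.
  by rewrite /witness_hi; field; rewrite -/witness_hi gt_eqF.
by rewrite weight_DL mulfK ?gt_eqF //; ring.
Qed.

End two_point_witness.

Theorem proposition1 (R : realType) :
  (forall (c mu3 : R), 0 < c -> c <= 2^-1 -> 0 < mu3 ->
     exists mu : probability R R,
       prob_on_pos mu /\ moment mu 3 = mu3%:E /\ delta mu c = c * mu3) /\
  (forall (c mu3 mu1 : R), 2^-1 < c -> c < 1 -> 0 < mu3 -> 0 < mu1 ->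
     1 <= mu3 * mu1 ->
     exists mu : probability R R,
       prob_on_pos mu /\ moment mu 3 = mu3%:E /\ moment mu 1 = mu1%:E /\
       delta mu c = (mu3 - (2 * c - 1) ^+ 2 / mu1) / (4 * (1 - c))).
Proof.
have three_sub2 : 3 - 2 = 1 :> R by lra.
have one_sub2 : 1 - 2 = -1 :> R by lra.
split=> [c m c_gt0 c_le m_gt0 | c m k c_gt c_lt1 _ k_gt0 mk_ge1].
- have c_lt1 : c < 1 by apply: le_lt_trans c_le _; lra.
  have capped : (1 - 0) * Num.min 1 (c * m / m) + 0 * Num.min 1 (c * m / m) = c.
    by rewrite subr0 mul0r addr0 mul1r mulfK ?gt_eqF // min_r // ltW.
  have [|mu [mu_pos mu_moment mu_delta]] :=
    exists_two_point_law _ m_gt0 m_gt0 (mulr_gt0 c_gt0 m_gt0) c_lt1 capped.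
    by rewrite lexx ler01.
  exists mu; rewrite mu_moment three_sub2 powRr1 ?(ltW m_gt0) //.
  by rewrite subr0 mul0r addr0 mul1r.
- have L_gt0 := witness_lo_gt0 c k c_gt k_gt0.
  have D_gt0 := lt_trans L_gt0 (witness_lo_lt_delta c m k c_lt1 k_gt0 mk_ge1).
  have H_gt0 := lt_trans D_gt0 (witness_delta_lt_hi c m k c_lt1 k_gt0 mk_ge1).
  have [mu [mu_pos mu_moment mu_delta]] :=
    exists_two_point_law (witness_weight_itv c m k c_gt c_lt1 k_gt0 mk_ge1)
      L_gt0 H_gt0 D_gt0 c_lt1 (witness_capped c m k c_gt c_lt1 k_gt0 mk_ge1).
  exists mu; rewrite !mu_moment three_sub2 one_sub2.
  rewrite !powRr1 ?powR_inv1 ?(ltW L_gt0) ?(ltW H_gt0) //.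
  by rewrite witness_mean ?witness_harmonic.
Qed.
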